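(* Let $\mathrm{Gr}$ be the covering-space relative $\mathbb{Q}$-grading on $\widehat{HF}(-L(p,q))$. For $0\leq i<p$, $$\mathrm{Gr}(x_{i+q\!\!\mod p},x_i)={1\over p}(p-1-2i).$$
   Context: $p>q$ are relatively prime positive integers. $-L(p,q)$ has the pointed Heegaard diagram with $\Sigma$ the torus $[0,1]\times[0,1]$ with edges identified, $\alpha$ the horizontal circle $y=1/2$, $\beta$ a circle of slope $-p/q$, and $z$ a point below $y=1/2$. The $p$ regions are $D_0,\ldots,D_{p-1}$ left to right with $z\in D_0$, and the $p$ points of $\alpha\cap\beta$ are $x_0,\ldots,x_{p-1}$ left to right along $\alpha$, with $x_0$ the upper right vertex of $D_0$. The differential vanishes so $\widehat{CF}=\widehat{HF}(-L(p,q))$. $\mathrm{Gr}(\mathbf{x},\mathbf{y})=\frac1n\mathrm{gr}(\tilde{\mathbf{x}},\tilde{\mathbf{y}})$ for any $n$-fold cover on which the lifted generators have equal $\mathrm{Spin}^c$ structure; equivalently $\mathrm{Gr}(\mathbf{x},\mathbf{y})=\frac1n[e(A)+n_\mathbf{x}(A)+n_\mathbf{y}(A)]$ for any basepoint-avoiding domain $A$ with $\partial\partial_\alpha A=n\mathbf{y}-n\mathbf{x}$. *)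

(* Combinatorial model of the pointed Heegaard diagram of -L(p,q). *)
From mathcomp Require Import all_boot all_order all_algebra.
Set Implicit Arguments. Unset Strict Implicit. Unset Printing Implicit Defensive.
Import Order.TTheory GRing.Theory Num.Theory.
Local Open Scope ring_scope.

(* Indices of regions D_j and intersection points x_k are taken modulo p
   (only j, k in 0..p-1 are meaningful). A 2-chain (domain) is a function
   A : nat -> int, A j being the multiplicity of region D_(j mod p). *)

Definition dom_mult (p : nat) (A : nat -> int) (j : nat) : int := A (j %% p)%N.

(* Corners of the region D_j: its upper edge lies on alpha (region below alpha)
   from x_(j-1) to x_j, its lower edge lies on alpha (region above alpha)
   from x_(j+q-1) to x_(j+q). *)
Definition corners (p q j : nat) : seq nat :=
  [:: (j + p - 1) %% p; j %% p; (j + q + p - 1) %% p; (j + q) %% p]%N.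

(* Euler measure of a region = chi - (#convex corners)/4. *)
Definition euler_region (p q j : nat) : rat :=
  1 - (size (corners p q j))%:R / 4%:R.

Definition euler (p q : nat) (A : nat -> int) : rat :=
  \sum_(j < p) (dom_mult p A j)%:~R * euler_region p q j.

(* Local multiplicity n_x(D_j) at the point x_k: average over the 4 quadrants. *)
Definition npt_region (p q j k : nat) : rat :=
  (count (pred1 (k %% p)%N) (corners p q j))%:R / 4%:R.

Definition npt (p q : nat) (A : nat -> int) (k : nat) : rat :=
  \sum_(j < p) (dom_mult p A j)%:~R * npt_region p q j k.

(* Coefficient of the alpha-segment s_k = [x_(k-1), x_k] (oriented left to right)
   in the boundary of A: D_(k-q) lies above s_k, D_k lies below s_k. *)
Definition alpha_bdy (p q : nat) (A : nat -> int) (k : nat) : int :=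
  dom_mult p A (k + p - q)%N - dom_mult p A k.

(* Coefficient of x_m in the 0-chain  d(d_alpha A), using d s_k = x_k - x_(k-1). *)
Definition bdy0 (p q : nat) (A : nat -> int) (m : nat) : int :=
  \sum_(k < p) alpha_bdy p q A k *
     ((m %% p == k %% p)%N%:R - (m %% p == (k + p - 1) %% p)%N%:R).

(* A is basepoint-avoiding (z lies in D_0) and d(d_alpha A) = n y - n x. *)
Definition connecting_domain (p q : nat) (x y n : nat) (A : nat -> int) : Prop :=
  dom_mult p A 0 = 0 /\
  forall m, (m < p)%N ->
    bdy0 p q A m = (n%:Z) * ((m == y %% p)%N%:R - (m == x %% p)%N%:R).

Definition gr_value (p q : nat) (x y n : nat) (A : nat -> int) : rat :=
  (euler p q A + npt p q A x + npt p q A y) / n%:R.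

From mathcomp Require Import all_boot all_order all_algebra zify ring.

Set Implicit Arguments.
Unset Strict Implicit.
Unset Printing Implicit Defensive.

Import Order.TTheory GRing.Theory Num.Theory.
Local Open Scope ring_scope.

(* Write a_j for the multiplicity of D_j in a domain A. Its alpha-boundary has
   coefficient b_k = a_(k-q) - a_k on the arc [x_(k-1), x_k], so the 0-chain
   d(d_alpha A) is sum_m (b_m - b_(m+1)) x_m. If it vanishes, b is a constant c,
   whence a_(k+q) = a_k - c; periodicity of a forces c = 0, and as q generates
   Z/p and a_0 = 0, A = 0. So domains connecting x_(i+q) to x_i are unique up to
   scaling, and Gr may be computed from the single one a_j = p[i < j] - j
   (with n = p). All regions are rectangles, of Euler measure 0, and averaging
   a over the corners at x_(i+q) and x_i gives (p - 1 - 2i)/p. *)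

Lemma sum_mul_indicator (R : pzRingType) (n J : nat) (F : nat -> R) (P : pred nat) :
  (J < n)%N -> (forall k, (k < n)%N -> P k = (k == J)) ->
  \sum_(k < n) F k * (P k)%:R = F J.
Proof.
move=> ltJn PE; rewrite (bigD1 (Ordinal ltJn)) //= PE // eqxx mulr1.
rewrite big1 ?addr0 // => k neq_kJ; rewrite PE // (_ : _ == J = false) ?mulr0 //.
by apply: contraNF neq_kJ => /eqP eq_kJ; apply/eqP/val_inj.
Qed.

Lemma eqn_modDr_small (p a b J k : nat) :
  (k < p)%N -> (J + a = b %[mod p])%N ->
  (((k + a) %% p == b %% p) = (k == J %% p))%N.
Proof. by move=> ltkp <-; rewrite eqn_modDr modn_small. Qed.

Lemma iter_addn_shift (V : zmodType) (f : nat -> V) (d : nat) (c : V) :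
  (forall k, f (k + d)%N = f k + c) -> forall t k, f (k + t * d)%N = f k + c *+ t.
Proof.
move=> fD; elim=> [|t IHt] k; first by rewrite mul0n addn0 addr0.
by rewrite mulSn addnA IHt fD mulrS addrA.
Qed.

Section LensDomains.

Variable p : nat.
Hypothesis p_gt0 : (0 < p)%N.

Lemma dom_mult_mod (A : nat -> int) (x y : nat) :
  (x = y %[mod p])%N -> dom_mult p A x = dom_mult p A y.
Proof. by rewrite /dom_mult => ->. Qed.

Lemma dom_mult_modn (A : nat -> int) (k : nat) : dom_mult p A (k %% p) = dom_mult p A k.
Proof. by rewrite /dom_mult modn_mod. Qed.

Lemma dom_multDmul (A : nat -> int) (k t : nat) :
  dom_mult p A (k + t * p) = dom_mult p A k.
Proof. by apply: dom_mult_mod; rewrite addnC modnMDl. Qed.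

Definition lens_domain (i k : nat) : int := if (i < k)%N then p%:Z - k%:Z else - k%:Z.

Lemma lens_domain_shift (i t : nat) : (i < p)%N -> (0 < t <= p)%N ->
  dom_mult p (lens_domain i) (i + t) = p%:Z - i%:Z - t%:Z.
Proof.
move=> lt_ip /andP[t_gt0 t_le_p]; rewrite /dom_mult /lens_domain.
have [lt_itp | le_pit] := ltnP (i + t) p.
  by rewrite modn_small // ifT; lia.
rewrite -(subnK le_pit) modnDr modn_small ?ifF; lia.
Qed.

Lemma lens_domain_step (i k : nat) : (i < p)%N ->
  dom_mult p (lens_domain i) k - dom_mult p (lens_domain i) k.+1
  = 1 - p%:Z * (k %% p == i)%N%:R.
Proof.
move=> lt_ip; rewrite /dom_mult /lens_domain -[k.+1]addn1 -modnDml addn1.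
have : (k %% p < p)%N by rewrite ltn_pmod.
move: (k %% p)%N => j lt_jp; have [lt_j1p | le_pj1] := ltnP j.+1 p.
  rewrite modn_small //.
  case: eqP => [->|/eqP neq_ji]; rewrite ?ltnn ?ltnSn /= ?mulr1 ?mulr0; first by lia.
  by case: ifP; case: ifP; lia.
have eq_j1p : j.+1 = p by apply/eqP; rewrite eqn_leq le_pj1 lt_jp.
rewrite eq_j1p modnn ltn0 subr0.
by case: eqP => [eq_ji|neq_ji]; case: ifP; rewrite /= ?mulr1 ?mulr0; lia.
Qed.

Variable q : nat.
Hypotheses (q_gt0 : (0 < q)%N) (q_lt_p : (q < p)%N).

Lemma alpha_bdy_mod (A : nat -> int) (k : nat) :
  alpha_bdy p q A (k %% p) = alpha_bdy p q A k.
Proof.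
rewrite /alpha_bdy dom_mult_modn; congr (_ - _).
by apply: dom_mult_mod; rewrite -!addnBA ?modnDml // ltnW.
Qed.

Lemma bdy0_alpha_bdy (A : nat -> int) (m : nat) :
  bdy0 p q A m = alpha_bdy p q A m - alpha_bdy p q A m.+1.
Proof.
rewrite /bdy0; under eq_bigr do rewrite mulrBr.
rewrite sumrB (@sum_mul_indicator _ _ (m %% p) _ (fun k => m %% p == k %% p)%N)
  ?ltn_pmod //; last first.
  move=> k ltkp; rewrite eq_sym -[k in (k %% p)%N]addn0.
  by rewrite (@eqn_modDr_small _ _ _ m) ?addn0.
rewrite (@sum_mul_indicator _ _ (m.+1 %% p) _ (fun k => m %% p == (k + p - 1) %% p)%N)
  ?ltn_pmod //; last first.
  move=> k ltkp; rewrite eq_sym -addnBA // (@eqn_modDr_small _ _ _ m.+1) //.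
  by rewrite addSn -addnS subn1 prednK // modnDr.
by rewrite !alpha_bdy_mod.
Qed.

Lemma npt_corners (A : nat -> int) (k : nat) :
  npt p q A k = ((dom_mult p A k.+1)%:~R + (dom_mult p A k)%:~R
                 + (dom_mult p A (k.+1 + (p - q)))%:~R
                 + (dom_mult p A (k + (p - q)))%:~R) / 4%:R.
Proof.
rewrite /npt /npt_region /corners /=.
under eq_bigr do rewrite addn0 !natrD mulrA !mulrDr.
rewrite -mulr_suml !big_split /=.
pose F j : rat := (dom_mult p A j)%:~R.
rewrite (@sum_mul_indicator _ _ (k.+1 %% p) F (fun j => (j + p - 1) %% p == k %% p)%N)
  ?ltn_pmod //; last first.
  move=> j ltjp; rewrite -addnBA // (@eqn_modDr_small _ _ _ k.+1) //.
  by rewrite addSn -addnS subn1 prednK // modnDr.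
rewrite (@sum_mul_indicator _ _ (k %% p) F (fun j => j %% p == k %% p)%N)
  ?ltn_pmod //; last first.
  by move=> j ltjp; rewrite -[j in (j %% p)%N]addn0 (@eqn_modDr_small _ _ _ k) ?addn0.
rewrite (@sum_mul_indicator _ _ ((k.+1 + (p - q)) %% p) F
           (fun j => (j + q + p - 1) %% p == k %% p)%N) ?ltn_pmod //; last first.
  move=> j ltjp; rewrite -addnA -addnBA ?addn_gt0 ?p_gt0 ?orbT //.
  apply: eqn_modDr_small => //.
  by rewrite (_ : _ + _ = 2 * p + k)%N ?modnMDl //; lia.
rewrite (@sum_mul_indicator _ _ ((k + (p - q)) %% p) F (fun j => (j + q) %% p == k %% p)%N)
  ?ltn_pmod //; last first.
  move=> j ltjp; apply: eqn_modDr_small => //.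
  by rewrite -addnA subnK ?modnDr // ltnW.
by rewrite /F !dom_mult_modn !addrA.
Qed.

Lemma npt_modn (A : nat -> int) (k : nat) : npt p q A (k %% p) = npt p q A k.
Proof. by rewrite /npt /npt_region modn_mod. Qed.

Lemma npt_scale (A B : nat -> int) (c : rat) (k : nat) :
  (forall j, (dom_mult p A j)%:~R = c * (dom_mult p B j)%:~R) ->
  npt p q A k = c * npt p q B k.
Proof.
by move=> AE; rewrite /npt mulr_sumr; apply: eq_bigr => j _; rewrite (AE j) -mulrA.
Qed.

Lemma euler_eq0 (A : nat -> int) : euler p q A = 0.
Proof. by apply: big1 => j _; rewrite /euler_region divff ?subrr ?mulr0. Qed.

Lemma bdy0_lincomb (A B : nat -> int) (a b : int) (m : nat) :
  bdy0 p q (fun j => a * A j - b * B j) m = a * bdy0 p q A m - b * bdy0 p q B m.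
Proof. by rewrite !bdy0_alpha_bdy /alpha_bdy /dom_mult; ring. Qed.

Lemma bdy0_lens_domain (i m : nat) : (i < p)%N ->
  bdy0 p q (lens_domain i) m
  = p%:Z * ((m %% p == i)%N%:R - ((m + (p - q)) %% p == i)%N%:R).
Proof.
move=> lt_ip; rewrite bdy0_alpha_bdy /alpha_bdy.
rewrite (_ : m.+1 + p - q = (m + (p - q)).+1)%N; last by lia.
rewrite -addnBA ?(ltnW q_lt_p) //; set f := dom_mult p (lens_domain i).
have -> : f (m + (p - q))%N - f m - (f (m + (p - q)).+1 - f m.+1)
          = (f (m + (p - q))%N - f (m + (p - q)).+1) - (f m - f m.+1) by ring.
by rewrite !lens_domain_step //; ring.
Qed.

Lemma lens_domain_connecting (i : nat) : (i < p)%N ->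
  connecting_domain p q ((i + q) %% p) i p (lens_domain i).
Proof.
move=> lt_ip; split; first by rewrite /dom_mult mod0n /lens_domain ltn0 oppr0.
move=> m lt_mp; rewrite bdy0_lens_domain // !modn_mod !(modn_small lt_ip) (modn_small lt_mp).
suff -> : ((m + (p - q)) %% p == i)%N = (m == (i + q) %% p)%N by [].
rewrite -{1}(modn_small lt_ip) (@eqn_modDr_small _ _ _ (i + q)) //.
by rewrite -addnA subnKC ?modnDr // ltnW.
Qed.

Lemma npt_lens_domain (i : nat) : (i < p)%N ->
  npt p q (lens_domain i) ((i + q) %% p) + npt p q (lens_domain i) i
  = p%:R - 1 - 2 * i%:R.
Proof.
move=> lt_ip.
have shift t : (0 < t <= p)%N ->
    (dom_mult p (lens_domain i) (i + t))%:~R = p%:R - i%:R - t%:R :> rat.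
  by move=> t_range; rewrite lens_domain_shift // !intrB -!pmulrn.
rewrite npt_modn !npt_corners.
rewrite -addnS (_ : i + q.+1 + (p - q) = i + 1 + 1 * p)%N ?dom_multDmul; last by lia.
rewrite (_ : i + q + (p - q) = i + p)%N; last by lia.
rewrite -[dom_mult p (lens_domain i) i](dom_multDmul _ _ 1) mul1n.
rewrite -[i.+1]addn1 (_ : i + 1 + (p - q) = i + (p - q + 1))%N; last by lia.
rewrite !shift; try lia.
by rewrite -[q.+1]addn1 !natrD natrB ?(ltnW q_lt_p) //; field.
Qed.

Lemma alpha_bdy_const (A : nat -> int) :
  (forall m, (m < p)%N -> bdy0 p q A m = 0) ->
  forall k, alpha_bdy p q A k = alpha_bdy p q A 0.
Proof.
move=> bdy_eq0.
have const_lt m : (m < p)%N -> alpha_bdy p q A m = alpha_bdy p q A 0.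
  elim: m => [//|m IHm] ltmp; rewrite -IHm ?(ltnW ltmp) //.
  by apply/eqP; rewrite eq_sym -subr_eq0 -bdy0_alpha_bdy bdy_eq0 ?(ltnW ltmp).
by move=> k; rewrite -alpha_bdy_mod const_lt ?ltn_pmod.
Qed.

Hypothesis coprime_pq : coprime p q.

Lemma closed_domain_eq0 (A : nat -> int) :
  dom_mult p A 0 = 0 -> (forall m, (m < p)%N -> bdy0 p q A m = 0) ->
  forall k, dom_mult p A k = 0.
Proof.
move=> A0 bdy_eq0; set c := alpha_bdy p q A 0.
have stepq k : dom_mult p A (k + q) = dom_mult p A k + - c.
  have := alpha_bdy_const bdy_eq0 (k + q); rewrite -/c /alpha_bdy.
  rewrite (_ : k + q + p - q = k + 1 * p)%N ?dom_multDmul; last by lia.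
  by move=> <-; rewrite opprB addrC subrK.
have iterq := iter_addn_shift stepq.
have c_eq0 : c = 0.
  have := iterq p 0%N; rewrite mulnC dom_multDmul -{1}[dom_mult p A 0]addr0.
  by move=> /addrI /esym /eqP; rewrite mulrn_eq0 oppr_eq0 gtn_eqF //= => /eqP.
have [km kn km_eq _] := @egcdnP q p q_gt0.
rewrite gcdnC (eqP coprime_pq) in km_eq.
move=> k; rewrite -(dom_multDmul A k (k * kn)) (_ : k + k * kn * p = 0 + k * km * q)%N.
  by rewrite iterq c_eq0 oppr0 mul0rn addr0.
by rewrite add0n -!mulnA km_eq mulnDr muln1 addnC.
Qed.

Lemma connecting_domain_unique (x y n1 n2 : nat) (A1 A2 : nat -> int) :
  connecting_domain p q x y n1 A1 -> connecting_domain p q x y n2 A2 ->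
  forall k, n2%:Z * dom_mult p A1 k = n1%:Z * dom_mult p A2 k.
Proof.
move=> [A1_0 bdy1] [A2_0 bdy2] k; apply/eqP; rewrite -subr_eq0; apply/eqP.
have := @closed_domain_eq0 (fun j => n2%:Z * A1 j - n1%:Z * A2 j) _ _ k.
rewrite /dom_mult /= => -> //.
  by move: A1_0 A2_0; rewrite /dom_mult => -> ->; rewrite !mulr0 subr0.
by move=> m ltmp; rewrite bdy0_lincomb bdy1 // bdy2 //; ring.
Qed.

Lemma gr_value_unique (x y n1 n2 : nat) (A1 A2 : nat -> int) :
  (0 < n1)%N -> (0 < n2)%N ->
  connecting_domain p q x y n1 A1 -> connecting_domain p q x y n2 A2 ->
  gr_value p q x y n1 A1 = gr_value p q x y n2 A2.
Proof.
move=> n1_gt0 n2_gt0 conn1 conn2.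
have n1_neq0 : n1%:R != 0 :> rat by rewrite pnatr_eq0 -lt0n.
have n2_neq0 : n2%:R != 0 :> rat by rewrite pnatr_eq0 -lt0n.
have scale j : (dom_mult p A1 j)%:~R = n1%:R / n2%:R * (dom_mult p A2 j)%:~R :> rat.
  have := congr1 (intr : int -> rat) (connecting_domain_unique conn1 conn2 j).
  rewrite !intrM -!pmulrn => eq12; apply: (mulfI n2_neq0).
  by rewrite eq12 mulrA mulrCA divff ?mulr1.
rewrite /gr_value !euler_eq0 !add0r !(npt_scale _ scale).
by field; rewrite n1_neq0 n2_neq0.
Qed.

End LensDomains.

Theorem proposition5p3 (p q : nat) (hq : (0 < q)%N) (hqp : (q < p)%N)
  (hcop : coprime p q) (i : nat) (hi : (i < p)%N) :
  (exists (n : nat) (A : nat -> int),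
      (0 < n)%N /\ connecting_domain p q ((i + q) %% p) i n A) /\
  (forall (n : nat) (A : nat -> int),
      (0 < n)%N -> connecting_domain p q ((i + q) %% p) i n A ->
      gr_value p q ((i + q) %% p) i n A = (p%:R - 1 - 2 * i%:R) / p%:R :> rat).
Proof.
have p_gt0 : (0 < p)%N := ltn_trans hq hqp.
have connW := lens_domain_connecting p_gt0 hq hqp hi.
split; first by exists p, (lens_domain p i).
move=> n A n_gt0 connA.
rewrite (gr_value_unique p_gt0 hq hqp hcop n_gt0 p_gt0 connA connW).
by rewrite /gr_value euler_eq0 add0r npt_lens_domain.
Qed.
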